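(* Let $(\pi_1,\pi_2)$ be a chainable pair of patterns, $\pi_i=(a_i,b_i,c_i,d_i)$, and let $\mathcal{P}=\mathcal{P}(\mathbf{S}_{\pi_1},\mathbf{S}_{\pi_2})$. Then for each $P\in\mathcal{P}$: (1) $R_P=\operatorname{supp}(\mathbf{S}_{\pi_1}[:,i])$ and $C_P=\operatorname{supp}(\mathbf{S}_{\pi_2}[i,:])$ for every $i\in P$; (2) the sets $R_P\times C_P$, $P\in\mathcal{P}$, are pairwise disjoint; (3) $|P|=r(\pi_1,\pi_2)$, $|R_P|=b_1$ and $|C_P|=c_2$; (4) $\operatorname{supp}(\mathbf{S}_{\pi_1*\pi_2})=\operatorname{supp}(\mathbf{S}_{\pi_1}\mathbf{S}_{\pi_2})=\bigcup_{P\in\mathcal{P}}R_P\times C_P$.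
   Context: A pattern is a tuple $\pi=(a,b,c,d)$ of positive integers and $\mathbf{S}_\pi:=\mathbf{I}_a\otimes\mathbf{1}_{b\times c}\otimes\mathbf{I}_d\in\{0,1\}^{abd\times acd}$. Patterns $\pi_1,\pi_2$ are chainable if $a_1c_1/a_2=b_2d_2/d_1=:r(\pi_1,\pi_2)$ is an integer, $a_1\mid a_2$ and $d_2\mid d_1$; then $\pi_1*\pi_2:=(a_1,b_1d_1/d_2,a_2c_2/a_1,d_2)$. For binary matrices $\mathbf{L}\in\{0,1\}^{m\times r},\mathbf{R}\in\{0,1\}^{r\times n}$, let $\mathbf{U}_i:=\mathbf{L}[:,i]\mathbf{R}[i,:]\in\{0,1\}^{m\times n}$; the relation $i\sim j\iff\mathbf{U}_i=\mathbf{U}_j$ partitions $\{1,\dots,r\}$ into classes, the set of which is $\mathcal{P}(\mathbf{L},\mathbf{R})$; for a class $P$, $R_P\subseteq\{1,\dots,m\}$ and $C_P\subseteq\{1,\dots,n\}$ are such that the common support of $\mathbf{U}_i$, $i\in P$, equals $R_P\times C_P$. $\operatorname{supp}$ denotes the set of indices of nonzero entries. *)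

(* Kronecker product: [tensmx] from mathcomp-real-closed
   (standard convention: index (i,j) of 'I_m * 'I_n  |->  i * n + j). *)
From mathcomp Require Import all_boot all_algebra.
From mathcomp Require Import mxtens.

Set Implicit Arguments.
Unset Strict Implicit.
Unset Printing Implicit Defensive.

Import GRing.Theory.
Local Open Scope ring_scope.

(* S_pi := I_a (x) 1_{b x c} (x) I_d, an (a b d) x (a c d) binary matrix,
   with entries in int (so that products S_{pi1} S_{pi2} are the usual ones). *)
Definition Spat (a b c d : nat) : 'M[int]_(a * b * d, a * c * d) :=
  ((1%:M : 'M[int]_a) *t (const_mx 1 : 'M[int]_(b, c))) *t (1%:M : 'M[int]_d).

Definition chainable (a1 b1 c1 d1 a2 b2 c2 d2 : nat) : Prop :=
  [/\ (a2 %| a1 * c1)%N, (d1 %| b2 * d2)%N,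
      (a1 * c1 %/ a2 = b2 * d2 %/ d1)%N, (a1 %| a2)%N & (d2 %| d1)%N].

Definition rchain (a1 c1 a2 : nat) : nat := (a1 * c1 %/ a2)%N.

Lemma chain_inner a1 b1 c1 d1 a2 b2 c2 d2 :
  chainable a1 b1 c1 d1 a2 b2 c2 d2 -> (a2 * b2 * d2 = a1 * c1 * d1)%N.
Proof.
case=> h1 h2 h3 _ _.
rewrite -mulnA -(divnK h2) -h3 -{2}(divnK h1).
by rewrite mulnA [(a2 * _)%N]mulnC.
Qed.

Lemma chain_rows a1 b1 c1 d1 a2 b2 c2 d2 :
  chainable a1 b1 c1 d1 a2 b2 c2 d2 ->
  (a1 * (b1 * d1 %/ d2) * d2 = a1 * b1 * d1)%N.
Proof.
case=> _ _ _ _ h; rewrite -mulnA divnK ?mulnA //.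
exact: dvdn_mull.
Qed.

Lemma chain_cols a1 b1 c1 d1 a2 b2 c2 d2 :
  chainable a1 b1 c1 d1 a2 b2 c2 d2 ->
  (a1 * (a2 * c2 %/ a1) * d2 = a2 * c2 * d2)%N.
Proof.
case=> _ _ _ h _; rewrite [(a1 * _)%N]mulnC divnK //.
exact: dvdn_mulr.
Qed.

Section Classes.
Variables (m r n : nat).

Definition suppM (p q : nat) (M : 'M[int]_(p, q)) : {set 'I_p * 'I_q} :=
  [set ij | M ij.1 ij.2 != 0].
Definition suppcol (M : 'M[int]_(m, r)) (i : 'I_r) : {set 'I_m} :=
  [set k | M k i != 0].
Definition supprow (M : 'M[int]_(r, n)) (i : 'I_r) : {set 'I_n} :=
  [set k | M i k != 0].

Definition Umx (L : 'M[int]_(m, r)) (R : 'M[int]_(r, n)) (i : 'I_r)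
  : 'M[int]_(m, n) := col i L *m row i R.

Definition classes (L : 'M[int]_(m, r)) (R : 'M[int]_(r, n))
  : {set {set 'I_r}} :=
  [set [set j | Umx L R j == Umx L R i] | i : 'I_r].

(* (R_P, C_P): sets such that supp U_i = R_P x C_P for all i in P
   (chosen by [pick]; when no such pair exists we default to (set0,set0)). *)
Definition RCpair (L : 'M[int]_(m, r)) (R : 'M[int]_(r, n)) (P : {set 'I_r})
  : {set 'I_m} * {set 'I_n} :=
  odflt (set0, set0)
    [pick RC : {set 'I_m} * {set 'I_n}
       | [forall i in P, suppM (Umx L R i) == setX RC.1 RC.2]].

Definition RP L R P := (RCpair L R P).1.
Definition CP L R P := (RCpair L R P).2.

End Classes.

From mathcomp Require Import all_boot all_algebra.
From mathcomp Require Import mxtens.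

Set Implicit Arguments.
Unset Strict Implicit.
Unset Printing Implicit Defensive.

Import GRing.Theory Num.Theory.

(* Read a row index x of S_(a,b,c,d) = I_a (x) 1_(b x c) (x) I_d in mixed radix as
   (alpha, beta, delta) in [a] x [b] x [d]: the entry at (x, y) is 1 exactly when
   the keys (alpha, delta) = (x / d / b, x mod d) of x and y agree.  Hence
   S_pi1 = [f x = g k] and S_pi2 = [g' k = h y] are incidence matrices, U_k is the
   indicator of {f = g k} x {h = g' k}, and k ~ j iff (g k, g' k) = (g j, g' j).
   For a chainable pair c1 = r t and b2 d2 = r d1 with t = a2 / a1, so the two
   keys of a middle index k carry exactly its key (k / d1 / r, k mod d1) for the
   pattern (a2, r, r, d1), whose fibres have r elements; the keys of pi1 * pi2
   are read off in the same way, which identifies supp S_(pi1 * pi2). *)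

Lemma setX_inj (T1 T2 : finType) (A A' : {set T1}) (B B' : {set T2}) :
  A != set0 -> B != set0 -> setX A B = setX A' B' -> A = A' /\ B = B'.
Proof.
move=> /set0Pn[a Aa] /set0Pn[b Bb] /setP eAB.
have /setXP[A'a B'b] : (a, b) \in setX A' B' by rewrite -eAB in_setX Aa Bb.
split; apply/setP => z.
  by have := eAB (z, b); rewrite !in_setX Bb B'b !andbT.
by have := eAB (a, z); rewrite !in_setX Aa A'a.
Qed.

Definition pattern_key (b d k : nat) : nat * nat := (k %/ d %/ b, k %% d).

Lemma pattern_key_bound a b d k :
  k < a * b * d -> k %/ d %/ b < a /\ k %% d < d.
Proof.
move=> lt_k; have := leq_ltn_trans (leq0n k) lt_k.
rewrite !muln_gt0 => /andP[/andP[_ b_gt0] d_gt0].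
by rewrite !ltn_divLR // ltn_pmod.
Qed.

Lemma mixed_radix_lt a b d q be s :
  q < a -> be < b -> s < d -> (q * b + be) * d + s < a * b * d.
Proof.
move=> lt_q lt_be lt_s.
have lt_qbe : q * b + be < a * b.
  apply: (@leq_trans (q * b + b)); first by rewrite ltn_add2l.
  by rewrite addnC -mulSn leq_mul2r lt_q orbT.
apply: (@leq_trans ((q * b + be) * d + d)); first by rewrite ltn_add2l.
by rewrite addnC -mulSn leq_mul2r lt_qbe orbT.
Qed.

Lemma divnMDl_small d q s : s < d -> (q * d + s) %/ d = q.
Proof.
by move=> lt_s; rewrite divnMDl ?(leq_ltn_trans _ lt_s) // divn_small ?addn0.
Qed.

Lemma pattern_key_digits b d q be s :
  be < b -> s < d -> pattern_key b d ((q * b + be) * d + s) = (q, s).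
Proof.
by move=> lt_be lt_s; rewrite /pattern_key !divnMDl_small // modnMDl modn_small.
Qed.

Lemma card_pattern_key_fiber M a b d q s : M = a * b * d -> q < a -> s < d ->
  #|[set x : 'I_M | pattern_key b d x == (q, s)]| = b.
Proof.
move=> -> lt_q lt_s.
pose digit (be : 'I_b) : 'I_(a * b * d) :=
  Ordinal (mixed_radix_lt lt_q (ltn_ord be) lt_s).
have digitK be : digit be %/ d %% b = be.
  by rewrite /= divnMDl_small // modnMDl modn_small.
have -> : [set x : 'I_(a * b * d) | pattern_key b d x == (q, s)] = digit @: setT.
  apply/setP => x; rewrite inE; apply/eqP/imsetP => [|[be _ ->]].
    rewrite /pattern_key => -[e_q e_s].
    have : 0 < a * b * d := leq_ltn_trans (leq0n x) (ltn_ord x).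
    rewrite !muln_gt0 => /andP[/andP[_ b_gt0] _].
    exists (Ordinal (ltn_pmod (x %/ d) b_gt0)) => //.
    by apply: val_inj; rewrite /= -e_q -e_s -!divn_eq.
  exact: pattern_key_digits.
rewrite card_imset ?cardsT ?card_ord // => u v.
by move/(congr1 (fun x : 'I_(a * b * d) => x %/ d %% b)); rewrite !digitK => /val_inj.
Qed.

Lemma pattern_key_onto M a b d q s : M = a * b * d -> 0 < b -> q < a -> s < d ->
  exists x : 'I_M, pattern_key b d x = (q, s).
Proof.
move=> eM b_gt0 lt_q lt_s.
have /card_gt0P[x] : 0 < #|[set x : 'I_M | pattern_key b d x == (q, s)]|.
  by rewrite (card_pattern_key_fiber eM).
by rewrite inE => /eqP; exists x.
Qed.

Lemma card_pattern_key_eq M a b c d k : M = a * b * d -> k < a * c * d ->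
  #|[set x : 'I_M | pattern_key b d x == pattern_key c d k]| = b.
Proof.
move=> eM /pattern_key_bound[lt_q lt_s].
exact: card_pattern_key_fiber eM lt_q lt_s.
Qed.

Lemma pattern_key_onto_key M a b c d k : M = a * b * d -> 0 < b -> k < a * c * d ->
  exists x : 'I_M, pattern_key b d x = pattern_key c d k.
Proof.
move=> eM b_gt0 /pattern_key_bound[lt_q lt_s].
exact: pattern_key_onto eM b_gt0 lt_q lt_s.
Qed.

Section ChainArithmetic.

Variables a1 b1 c1 d1 a2 b2 c2 d2 : nat.
Hypotheses (a1_gt0 : 0 < a1) (c1_gt0 : 0 < c1) (d1_gt0 : 0 < d1).
Hypothesis chain : chainable a1 b1 c1 d1 a2 b2 c2 d2.

Local Notation r := (rchain a1 c1 a2).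
Local Notation t := (a2 %/ a1).

Lemma chain_c1 : c1 = r * t.
Proof.
case: chain => dvd_a2 _ _ dvd_a1 _.
suff cancel_a1 r' t' : a1 * c1 = r' * a2 -> a2 = t' * a1 -> c1 = r' * t'.
  by apply: cancel_a1; rewrite divnK.
move=> e_a1c1 e_a2; apply/eqP.
by rewrite -(eqn_pmul2l a1_gt0) e_a1c1 e_a2 mulnA mulnC.
Qed.

Lemma chain_b2d2 : b2 * d2 = r * d1.
Proof. by case: chain => _ dvd_d1 e _ _; rewrite /rchain e divnK. Qed.

Lemma rchain_gt0 : 0 < r.
Proof. by have := c1_gt0; rewrite {1}chain_c1 muln_gt0 => /andP[]. Qed.

Lemma chain_inner_rchain : a1 * c1 * d1 = a2 * r * d1.
Proof. by case: chain => dvd_a2 _ _ _ _; rewrite /rchain [a2 * _]mulnC divnK. Qed.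

Lemma pattern_key_c1 k : pattern_key c1 d1 k = (k %/ d1 %/ r %/ t, k %% d1).
Proof. by rewrite /pattern_key {1}chain_c1 divnMA. Qed.

Lemma pattern_key_b2 k : pattern_key b2 d2 k = (k %/ d1 %/ r, k %% d1 %% d2).
Proof.
case: chain => _ _ _ _ dvd_d2.
by rewrite /pattern_key -!divnMA [d2 * _]mulnC chain_b2d2 [r * _]mulnC modn_dvdm.
Qed.

Lemma pattern_key_product_rows x :
  pattern_key (b1 * d1 %/ d2) d2 x = (x %/ d1 %/ b1, x %% d1 %% d2).
Proof.
case: chain => _ _ _ _ dvd_d2.
by rewrite /pattern_key -!divnMA [d2 * _]mulnC divnK ?dvdn_mull // mulnC modn_dvdm.
Qed.

Lemma pattern_key_product_cols y :
  pattern_key (a2 * c2 %/ a1) d2 y = (y %/ d2 %/ c2 %/ t, y %% d2).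
Proof.
case: chain => _ _ _ dvd_a1 _.
by rewrite /pattern_key mulnC -muln_divA // divnMA.
Qed.

Lemma chain_middle_key j k :
  (pattern_key c1 d1 j == pattern_key c1 d1 k)
    && (pattern_key b2 d2 j == pattern_key b2 d2 k)
  = (pattern_key r d1 j == pattern_key r d1 k).
Proof.
rewrite !pattern_key_c1 !pattern_key_b2 /pattern_key !xpair_eqE.
apply/idP/idP => [/andP[/andP[_ /eqP->] /andP[/eqP-> _]] | /andP[/eqP-> /eqP->]];
  by rewrite !eqxx.
Qed.

Lemma chain_product_key x y : y < a2 * c2 * d2 ->
  (pattern_key (b1 * d1 %/ d2) d2 x == pattern_key (a2 * c2 %/ a1) d2 y)
  = [exists k : 'I_(a1 * c1 * d1),
       (pattern_key b1 d1 x == pattern_key c1 d1 k)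
         && (pattern_key b2 d2 k == pattern_key c2 d2 y)].
Proof.
move=> lt_y; rewrite pattern_key_product_rows pattern_key_product_cols.
apply/eqP/existsP => [[ex ey] | [k]].
  have [lt_yq _] := pattern_key_bound lt_y.
  (* witness: key (alpha of y, delta of x) for the pattern (a2, r, r, d1) *)
  have [k [ek1 ek2]] :=
    pattern_key_onto chain_inner_rchain rchain_gt0 lt_yq (ltn_pmod x d1_gt0).
  exists k.
  by rewrite pattern_key_c1 pattern_key_b2 ek1 ek2 /pattern_key ex ey !eqxx.
rewrite pattern_key_c1 pattern_key_b2 /pattern_key !xpair_eqE.
by case/andP => /andP[/eqP-> /eqP->] /andP[/eqP<- /eqP<-].
Qed.

End ChainArithmetic.

Local Open Scope ring_scope.

Section OuterProducts.

Variables (m r n : nat) (L : 'M[int]_(m, r)) (R : 'M[int]_(r, n)).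

Lemma UmxE i x y : Umx L R i x y = L x i * R i y.
Proof. by rewrite !mxE big_ord1 !mxE. Qed.

Lemma supp_Umx i : suppM (Umx L R i) = setX (suppcol L i) (supprow R i).
Proof. by apply/setP => -[x y]; rewrite !inE UmxE mulf_eq0 negb_or. Qed.

Definition Umx_class i := [set j | Umx L R j == Umx L R i].

Lemma mem_Umx_class i : i \in Umx_class i.
Proof. by rewrite inE. Qed.

Lemma Umx_class_classes i : Umx_class i \in classes L R.
Proof. exact: imset_f. Qed.

Lemma classes_neq0 P : P \in classes L R -> P != set0.
Proof. by case/imsetP => i _ ->; apply/set0Pn; exists i; apply: mem_Umx_class. Qed.

Lemma classes_Umx_class P i : P \in classes L R -> i \in P -> P = Umx_class i.
Proof.
case/imsetP => i0 _ -> /[!inE] /eqP e_i.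
by apply/setP => j; rewrite !inE e_i.
Qed.

Lemma RCpair_class P i : suppcol L i != set0 -> supprow R i != set0 ->
  P \in classes L R -> i \in P -> RP L R P = suppcol L i /\ CP L R P = supprow R i.
Proof.
move=> col_i row_i PL iP; rewrite /RP /CP /RCpair.
case: pickP => [[A B] /forall_inP /= suppAB | noRC].
  have /eqP := suppAB i iP; rewrite supp_Umx.
  by case/(setX_inj col_i row_i) => -> ->.
suff: false by [].
rewrite -(noRC (suppcol L i, supprow R i)); apply/forall_inP => j /=.
by rewrite (classes_Umx_class PL iP) inE => /eqP->; rewrite supp_Umx.
Qed.

Lemma suppM_mulmx_ge0 : (forall x k, 0 <= L x k) -> (forall k y, 0 <= R k y) ->
  suppM (L *m R) = \bigcup_k suppM (Umx L R k).
Proof.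
move=> L_ge0 R_ge0; apply/setP => -[x y]; rewrite inE mxE.
rewrite psumr_neq0 => [|k _]; last exact: mulr_ge0.
apply/hasP/bigcupP => -[k _ xy_k]; exists k => //;
  by move: xy_k; rewrite /= inE UmxE lt0r ?mulr_ge0 //= andbT.
Qed.

Lemma suppM_mulmx_classes :
  (forall x k, 0 <= L x k) -> (forall k y, 0 <= R k y) ->
  (forall k, suppcol L k != set0) -> (forall k, supprow R k != set0) ->
  suppM (L *m R) = \bigcup_(P in classes L R) setX (RP L R P) (CP L R P).
Proof.
move=> L_ge0 R_ge0 col_neq0 row_neq0; rewrite suppM_mulmx_ge0 //.
apply/setP => z; apply/bigcupP/bigcupP => [[k _ zk] | [P PL zP]].
  have kL := Umx_class_classes k.
  exists (Umx_class k) => //.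
  have [-> ->] := RCpair_class (col_neq0 k) (row_neq0 k) kL (mem_Umx_class k).
  by rewrite -supp_Umx.
have /set0Pn[i iP] := classes_neq0 PL.
have [eR eC] := RCpair_class (col_neq0 i) (row_neq0 i) PL iP.
by exists i => //; rewrite supp_Umx -eR -eC.
Qed.

End OuterProducts.

Definition incidence_mx (T : eqType) m n (f : 'I_m -> T) (g : 'I_n -> T)
  : 'M[int]_(m, n) := \matrix_(i, j) (f i == g j)%:R.

Section Incidence.

Variables (T : eqType) (m n : nat) (f : 'I_m -> T) (g : 'I_n -> T).

Lemma incidence_ge0 i j : 0 <= incidence_mx f g i j.
Proof. by rewrite mxE ler0n. Qed.

Lemma incidence_neq0 i j : (incidence_mx f g i j != 0) = (f i == g j).
Proof. by rewrite mxE pnatr_eq0 eqb0 negbK. Qed.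

Lemma suppM_incidence : suppM (incidence_mx f g) = [set ij | f ij.1 == g ij.2].
Proof. by apply/setP => ij; rewrite !inE incidence_neq0. Qed.

Lemma suppcol_incidence j : suppcol (incidence_mx f g) j = [set i | f i == g j].
Proof. by apply/setP => i; rewrite !inE incidence_neq0. Qed.

Lemma supprow_incidence i : supprow (incidence_mx f g) i = [set j | f i == g j].
Proof. by apply/setP => j; rewrite !inE incidence_neq0. Qed.

End Incidence.

Lemma castmx_incidence (T : eqType) m n m' n' (e : (m = m') * (n = n'))
  (f g : nat -> T) :
  castmx e (incidence_mx (fun i : 'I_m => f i) (fun j : 'I_n => g j))
  = incidence_mx (fun i : 'I_m' => f i) (fun j : 'I_n' => g j).
Proof. by apply/matrixP => i j; rewrite castmxE !mxE. Qed.

Section IncidenceProduct.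

Variables (T T' : eqType) (m r n : nat).
Variables (f : 'I_m -> T) (g : 'I_r -> T) (g' : 'I_r -> T') (h : 'I_n -> T').

Local Notation L := (incidence_mx f g).
Local Notation R := (incidence_mx g' h).

Lemma suppM_mul_incidence :
  suppM (L *m R) = [set xy | [exists k, (f xy.1 == g k) && (g' k == h xy.2)]].
Proof.
rewrite suppM_mulmx_ge0 => [|x k|k y]; try exact: incidence_ge0.
apply/setP => -[x y]; rewrite inE.
have supp_k k : ((x, y) \in suppM (Umx L R k)) = (f x == g k) && (g' k == h y).
  by rewrite supp_Umx in_setX suppcol_incidence supprow_incidence !inE.
by apply/bigcupP/existsP => -[k] => [_|]; rewrite ?supp_k => xy_k;
  exists k; rewrite ?supp_k.
Qed.

Hypotheses (f_onto : forall k, exists x, f x = g k)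
           (h_onto : forall k, exists y, h y = g' k).

Lemma suppcol_incidence_neq0 k : suppcol L k != set0.
Proof.
by have [x fx] := f_onto k; apply/set0Pn; exists x; rewrite suppcol_incidence inE fx.
Qed.

Lemma supprow_incidence_neq0 k : supprow R k != set0.
Proof.
by have [y hy] := h_onto k; apply/set0Pn; exists y; rewrite supprow_incidence inE hy.
Qed.

Lemma Umx_incidence_eq i j :
  (Umx L R i == Umx L R j) = (g i == g j) && (g' i == g' j).
Proof.
apply/eqP/andP => [eU | [/eqP gij /eqP g'ij]]; last first.
  by apply/matrixP => x y; rewrite !UmxE !mxE gij g'ij.
have [x fx] := f_onto i; have [y hy] := h_onto i.
have := congr1 (fun U : 'M_(m, n) => U x y) eU.
rewrite !UmxE !mxE fx hy !eqxx [g' j == _]eq_sym.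
by case: (g i == g j); case: (g' i == g' j).
Qed.

Lemma Umx_class_incidence i :
  Umx_class L R i = [set j | (g j == g i) && (g' j == g' i)].
Proof. by apply/setP => j; rewrite !inE Umx_incidence_eq. Qed.

Lemma classes_incidence_disjoint P Q :
  P \in classes L R -> Q \in classes L R -> P != Q ->
  [disjoint setX (RP L R P) (CP L R P) & setX (RP L R Q) (CP L R Q)].
Proof.
move=> PL QL.
have /set0Pn[i iP] := classes_neq0 PL; have /set0Pn[j jQ] := classes_neq0 QL.
have col_neq0 := suppcol_incidence_neq0; have row_neq0 := supprow_incidence_neq0.
have [-> ->] := RCpair_class (col_neq0 i) (row_neq0 i) PL iP.
have [-> ->] := RCpair_class (col_neq0 j) (row_neq0 j) QL jQ.
rewrite -setI_eq0; apply: contraNT => /set0Pn[[x y]].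
rewrite !suppcol_incidence !supprow_incidence !inE /=.
case/andP=> /andP[/eqP fxi /eqP g'iy] /andP[/eqP fxj /eqP g'jy].
rewrite (classes_Umx_class PL iP) (classes_Umx_class QL jQ) !Umx_class_incidence.
by rewrite -fxi fxj g'iy g'jy.
Qed.

End IncidenceProduct.

Lemma Spat_incidence a b c d :
  Spat a b c d = incidence_mx (fun x : 'I_(a * b * d) => pattern_key b d x)
                              (fun y : 'I_(a * c * d) => pattern_key c d y).
Proof.
apply/matrixP => x y.
rewrite /Spat !mxE /= mulr1 /pattern_key xpair_eqE -!val_eqE /=.
by case: eqP; case: eqP.
Qed.

Theorem lemma4p6 (a1 b1 c1 d1 a2 b2 c2 d2 : nat)
  (ha1 : (0 < a1)%N) (hb1 : (0 < b1)%N) (hc1 : (0 < c1)%N) (hd1 : (0 < d1)%N)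
  (ha2 : (0 < a2)%N) (hb2 : (0 < b2)%N) (hc2 : (0 < c2)%N) (hd2 : (0 < d2)%N)
  (H : chainable a1 b1 c1 d1 a2 b2 c2 d2) :
  let L := Spat a1 b1 c1 d1 in
  let R := castmx (chain_inner H, erefl) (Spat a2 b2 c2 d2) in
  let Pc := classes L R in
  (* pi1 * pi2 = (a1, b1 d1 / d2, a2 c2 / a1, d2) *)
  let S12 := castmx (chain_rows H, chain_cols H)
               (Spat a1 (b1 * d1 %/ d2) (a2 * c2 %/ a1) d2) in
  [/\ (forall P, P \in Pc -> forall i, i \in P ->
         RP L R P = suppcol L i /\ CP L R P = supprow R i),
      (forall P Q, P \in Pc -> Q \in Pc -> P != Q ->
         [disjoint setX (RP L R P) (CP L R P) & setX (RP L R Q) (CP L R Q)]),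
      (forall P, P \in Pc ->
         [/\ #|P| = rchain a1 c1 a2, #|RP L R P| = b1 & #|CP L R P| = c2]),
      suppM S12 = suppM (L *m R)
    & suppM (L *m R) = \bigcup_(P in Pc) setX (RP L R P) (CP L R P)].
Proof.
move=> L R Pc S12.
rewrite {}/Pc {}/S12 {}/L {}/R !Spat_incidence !castmx_incidence.
have lt_mid (k : 'I_(a1 * c1 * d1)) : (k < a2 * b2 * d2)%N.
  by rewrite (chain_inner H) ltn_ord.
have L_onto (k : 'I_(a1 * c1 * d1)) := pattern_key_onto_key erefl hb1 (ltn_ord k).
have R_onto (k : 'I_(a1 * c1 * d1)) := pattern_key_onto_key erefl hc2 (lt_mid k).
have col_neq0 := suppcol_incidence_neq0 L_onto.
have row_neq0 := supprow_incidence_neq0 R_onto.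
split.
- by move=> P PL i iP; apply: RCpair_class.
- exact: classes_incidence_disjoint.
- move=> P PL; have /set0Pn[i iP] := classes_neq0 PL.
  have [-> ->] := RCpair_class (col_neq0 i) (row_neq0 i) PL iP.
  rewrite (classes_Umx_class PL iP) (Umx_class_incidence L_onto R_onto).
  rewrite suppcol_incidence supprow_incidence.
  under eq_finset => j do rewrite (chain_middle_key ha1 H).
  split; last under eq_finset => y do rewrite eq_sym.
  + apply: (card_pattern_key_eq (chain_inner_rchain H)).
    by rewrite -(chain_inner_rchain H) ltn_ord.
  + exact: card_pattern_key_eq erefl (ltn_ord i).
  + exact: card_pattern_key_eq erefl (lt_mid i).
- apply/setP => -[x y]; rewrite suppM_incidence suppM_mul_incidence !inE /=.
  exact: (chain_product_key ha1 hc1 hd1 H).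
- by apply: suppM_mulmx_classes => // *; apply: incidence_ge0.
Qed.
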